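(* There exist an environment $E$ and a total preorder $\succeq$ on $\Pi^E$ such that $\succeq\in\mathrm{Ord}_{\mathrm{LAR}}(E)\cap\mathrm{Ord}_{\mathrm{LTL}}(E)$ but $\succeq\notin\mathrm{Ord}_{\mathrm{RM}}(E)\cup\mathrm{Ord}_{\mathrm{MR}}(E)$.
   Context: An environment is a tuple $E=(\mathcal S,\mathcal A,\mathcal T,\mathcal I)$ where $\mathcal S,\mathcal A$ are finite nonempty sets, $\mathcal T:\mathcal S\times\mathcal A\to\Delta(\mathcal S)$ and $\mathcal I\in\Delta(\mathcal S)$. A policy is a map $\pi:\mathcal S\to\Delta(\mathcal A)$ (stationary, possibly stochastic); $\Pi^E$ denotes the set of all policies. A trajectory $\xi=(s_0,a_0,s_1,a_1,\dots)\in\Xi:=\mathcal S\times(\mathcal A\times\mathcal S)^\omega$ is generated under $\pi$ by $s_0\sim\mathcal I$, $a_t\sim\pi(s_t)$, $s_{t+1}\sim\mathcal T(s_t,a_t)$; $\mathbb E^\pi_\xi$ denotes expectation under this distribution. An objective-specification formalism $X$ assigns to each environment $E$ a set of objective specifications, each inducing a total preorder $\succeq$ on $\Pi^E$; $\mathrm{Ord}_X(E)$ is the set of total preorders so induced. A specification defining a scalar $J:\Pi^E\to\mathbb R$ induces $\pi_1\succeq\pi_2\iff J(\pi_1)\ge J(\pi_2)$. MR: specification $(\mathcal R,\gamma)$, $\mathcal R:\mathcal S\times\mathcal A\times\mathcal S\to\mathbb R$, $\gamma\in[0,1)$, $J(\pi)=\mathbb E^\pi_\xi[\sum_{t=0}^\infty\gamma^t\mathcal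 R(s_t,a_t,s_{t+1})]$. LAR: specification $(\mathcal R)$, $\mathcal R:\mathcal S\times\mathcal A\times\mathcal S\to\mathbb R$, $J(\pi)=\lim_{N\to\infty}\frac1N\mathbb E^\pi_\xi[\sum_{t=0}^{N-1}\mathcal R(s_t,a_t,s_{t+1})]$. LTL: specification $(\varphi)$ with $\varphi$ a linear temporal logic formula whose atomic propositions are the transitions $(s,a,s')\in\mathcal S\times\mathcal A\times\mathcal S$, built with $\neg,\lor,\land,\to$ and the temporal operators $\bigcirc$ (next), $\square$ (always), $\lozenge$ (eventually), $\mathcal U$ (until). Semantics on a trajectory $\xi$ at time $t$: an atomic proposition $(s,a,s')$ holds iff $(s_t,a_t,s_{t+1})=(s,a,s')$; $\bigcirc\psi$ holds iff $\psi$ holds at $t+1$; $\square\psi$ iff $\psi$ holds at every $t'\ge t$; $\lozenge\psi$ iff $\psi$ holds at some $t'\ge t$; $\psi\,\mathcal U\,\chi$ iff there is $t'\ge t$ with $\chi$ holding at $t'$ and $\psi$ holding at every $t''$ with $t\le t''<t'$; Boolean connectives as usual. $\varphi(\xi)=1$ if $\varphi$ holds at time $0$ and $0$ otherwise; $J(\pi)=\mathbb E^\pi_\xi[\varphi(\xi)]$. RM (reward machines): specification $(U,u_0,\delta_U,\delta_{\mathcal R},\gamma)$ with $U$ a finite set, $u_0\in U$, $\delta_U:U\times\mathcal S\times\mathcal A\times\mathcal S\to U$, $\delta_{\mathcal R}:U\times U\to(\mathcal S\times\mathcal A\times\mathcal S\to\mathbb R)$, $\gamma\in[0,1)$; along a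 trajectory $u_{t+1}=\delta_U(u_t,s_t,a_t,s_{t+1})$ and $J(\pi)=\mathbb E^\pi_\xi[\sum_{t=0}^\infty\gamma^t\,\delta_{\mathcal R}(u_t,u_{t+1})(s_t,a_t,s_{t+1})]$. *)

From HB Require Import structures.
From mathcomp Require Import all_boot all_order all_algebra.
From mathcomp Require Import all_classical all_reals all_analysis.
Set Implicit Arguments. Unset Strict Implicit. Unset Printing Implicit Defensive.
Import Order.TTheory GRing.Theory Num.Theory.
Import numFieldNormedType.Exports.
Local Open Scope classical_set_scope.
Local Open Scope ring_scope.

Section Defs.
Variable R : realType.

Definition is_dist (T : finType) (p : T -> R) : Prop :=
  (forall x, 0 <= p x) /\ \sum_(x : T) p x = 1.

Record env := Env {
  st : finType;
  act : finType;
  st_nonempty : (0 < #|{: st}|)%N;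
  act_nonempty : (0 < #|{: act}|)%N;
  trans : st -> act -> st -> R;
  init : st -> R;
  trans_dist : forall s a, is_dist (trans s a);
  init_dist : is_dist init }.

Variable E : env.
Notation S := (st E).
Notation A := (act E).

Definition policy := {pol : S -> A -> R | forall s, is_dist (pol s)}.

Definition traj := nat -> S * A.

(* probability that the first n pairs (s_i,a_i), i < n, equal p 0, ..., p (n-1) *)
Definition prefP (pol : policy) (n : nat) (p : nat -> S * A) : R :=
  if n is n'.+1 then
    init (p 0%N).1 * (\prod_(i < n) sval pol (p i).1 (p i).2)
      * (\prod_(i < n') trans (p i).1 (p i).2 (p i.+1).1)
  else 1.

Definition tup_fun (n : nat) (t : n.+1.-tuple (S * A)) : traj :=
  fun i => nth (thead t) t i.

(* E^pol[g(xi)] for g depending only on the first n+1 pairs (s_i,a_i), i <= n *)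
Definition expn (pol : policy) (n : nat) (g : traj -> R) : R :=
  \sum_(t : n.+1.-tuple (S * A)) prefP pol n.+1 (tup_fun t) * g (tup_fun t).

Definition rew (Rw : S -> A -> S -> R) (xi : traj) (t : nat) : R :=
  Rw (xi t).1 (xi t).2 (xi t.+1).1.

(* MR: J(pol) = E[sum_t gamma^t R(s_t,a_t,s_{t+1})]
   = lim_N E[sum_{t<N} gamma^t R(...)]  (bounded convergence) *)
Definition J_MR (Rw : S -> A -> S -> R) (gamma : R) (pol : policy) : R :=
  limn (fun N => expn pol N (fun xi => \sum_(t < N) gamma ^+ t * rew Rw xi t)).

Definition J_LAR (Rw : S -> A -> S -> R) (pol : policy) : R :=
  limn (fun N => N%:R^-1 * expn pol N (fun xi => \sum_(t < N) rew Rw xi t)).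

Fixpoint rm_state (U : finType) (u0 : U) (dU : U -> S -> A -> S -> U)
    (xi : traj) (t : nat) : U :=
  if t is t'.+1 then dU (rm_state u0 dU xi t') (xi t').1 (xi t').2 (xi t).1
  else u0.

Definition J_RM (U : finType) (u0 : U) (dU : U -> S -> A -> S -> U)
    (dR : U -> U -> S -> A -> S -> R) (gamma : R) (pol : policy) : R :=
  limn (fun N => expn pol N (fun xi =>
     \sum_(t < N) gamma ^+ t *
        rew (dR (rm_state u0 dU xi t) (rm_state u0 dU xi t.+1)) xi t)).

Inductive ltl :=
| LAtom of S & A & S
| LNot of ltl
| LOr of ltl & ltl
| LAnd of ltl & ltl
| LImp of ltl & ltl
| LNext of ltl
| LAlways of ltl
| LEventually of ltl
| LUntil of ltl & ltl.

Fixpoint holds (phi : ltl) (xi : traj) (t : nat) : Prop :=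
  match phi with
  | LAtom s a s' => (xi t).1 = s /\ (xi t).2 = a /\ (xi t.+1).1 = s'
  | LNot p => ~ holds p xi t
  | LOr p q => holds p xi t \/ holds q xi t
  | LAnd p q => holds p xi t /\ holds q xi t
  | LImp p q => holds p xi t -> holds q xi t
  | LNext p => holds p xi t.+1
  | LAlways p => forall t', (t <= t')%N -> holds p xi t'
  | LEventually p => exists2 t', (t <= t')%N & holds p xi t'
  | LUntil p q => exists2 t', (t <= t')%N &
        (holds q xi t' /\ forall t'', (t <= t'')%N -> (t'' < t')%N -> holds p xi t'')
  end.

(* Trajectory law P^pol: cylinder sets [xi | xi 0 = p 0, ..., xi n = p n]
   have probability prefP pol n.+1 p; P^pol of a set X is its Caratheodory outer
   measure, i.e. the infimum of the total probability of countable covers of X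
   by cylinders (None = empty set).  On measurable sets (in particular on LTL
   events) this is the measure of X under the trajectory distribution. *)
Definition cyl (c : option {n : nat & n.+1.-tuple (S * A)}) : set traj :=
  if c is Some (existT n p) then [set xi | forall i, (i <= n)%N -> xi i = tup_fun p i]
  else set0.

Definition cylP (pol : policy) (c : option {n : nat & n.+1.-tuple (S * A)}) : R :=
  if c is Some (existT n p) then prefP pol n.+1 (tup_fun p) else 0.

Definition trajP (pol : policy) (X : set traj) : \bar R :=
  ereal_inf [set (\sum_(0 <= k <oo) (cylP pol (C k))%:E)%E |
             C in [set C : nat -> option {n : nat & n.+1.-tuple (S * A)} |
                   X `<=` \bigcup_k cyl (C k)]].

Definition J_LTL (phi : ltl) (pol : policy) : R :=
  fine (trajP pol [set xi | holds phi xi 0]).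

Definition induced (J : policy -> R) (ord : policy -> policy -> Prop) : Prop :=
  forall p q, ord p q <-> J q <= J p.

Definition total_preorder (ord : policy -> policy -> Prop) : Prop :=
  (forall p q r, ord p q -> ord q r -> ord p r) /\ (forall p q, ord p q \/ ord q p).

Definition in_Ord_MR (ord : policy -> policy -> Prop) : Prop :=
  exists (Rw : S -> A -> S -> R) (gamma : R),
    0 <= gamma < 1 /\ induced (J_MR Rw gamma) ord.

Definition in_Ord_LAR (ord : policy -> policy -> Prop) : Prop :=
  exists Rw : S -> A -> S -> R, induced (J_LAR Rw) ord.

Definition in_Ord_LTL (ord : policy -> policy -> Prop) : Prop :=
  exists phi : ltl, induced (J_LTL phi) ord.

Definition in_Ord_RM (ord : policy -> policy -> Prop) : Prop :=
  exists (U : finType) (u0 : U) (dU : U -> S -> A -> S -> U)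
         (dR : U -> U -> S -> A -> S -> R) (gamma : R),
    0 <= gamma < 1 /\ induced (J_RM u0 dU dR gamma) ord.

End Defs.

(* In the latch environment the agent starts unlatched, latches for good by
   playing [true], and earns reward 1 at each unlatched step where it plays
   [false].  Both the long-run average reward and the probability of
   "always (false, false, false)" are 1 for a policy that never latches and 0
   for every other policy, so they induce the same order, in which the
   never-latching policies are strictly above all others.  A discounted
   objective, with or without a reward machine, is a uniform limit of
   finite-horizon expectations of bounded rewards, and a horizon-N expectation
   moves by O(N p) when the latching probability is p.  Hence policies latching
   with small probability p > 0 have values arbitrarily close to that of the
   never-latching policy, whereas the order forces them to share the value of
   the always-latching one. *)

From Pilot Require Import Defs.
From HB Require Import structures.
From mathcomp Require Import all_boot all_order all_algebra.
From mathcomp Require Import all_classical all_reals all_analysis.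
From mathcomp Require Import ring lra.
Set Implicit Arguments. Unset Strict Implicit. Unset Printing Implicit Defensive.
Import Order.TTheory GRing.Theory Num.Theory.
Import numFieldNormedType.Exports.
Local Open Scope classical_set_scope.
Local Open Scope ring_scope.

Local Notation expect := Defs.expn.

Section FiniteHorizonExpectation.
Variables (R : realType) (E : env R).
Local Notation S := (st E).
Local Notation A := (act E).
Local Notation trans := (@Defs.trans R E).
Local Notation init := (@Defs.init R E).
Implicit Types (pol : policy E) (xi : traj E).

Definition determined_by (n : nat) (g : traj E -> R) :=
  forall xi xi', (forall i, (i <= n)%N -> xi i = xi' i) -> g xi = g xi'.

Definition splice xi (n : nat) (x : S * A) : traj E :=
  fun i => if (i <= n)%N then xi i else x.

Lemma determined_by_le n m g : (n <= m)%N -> determined_by n g -> determined_by m g.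
Proof. by move=> nm gn xi xi' eq_xi; apply: gn => i /leq_trans/(_ nm)/eq_xi. Qed.

Lemma policy_ge0 pol s a : 0 <= sval pol s a.
Proof. exact: (proj1 (svalP pol s) a). Qed.

Lemma policy_sum1 pol s : \sum_a sval pol s a = 1.
Proof. exact: (proj2 (svalP pol s)). Qed.

Lemma trans_ge0 s a s' : 0 <= trans s a s'.
Proof. exact: (proj1 (@trans_dist R E s a) s'). Qed.

Lemma init_ge0 s : 0 <= init s.
Proof. exact: (proj1 (@init_dist R E) s). Qed.

Lemma step_weight_ge0 pol s a (x : S * A) : 0 <= sval pol x.1 x.2 * trans s a x.1.
Proof. by rewrite mulr_ge0 ?policy_ge0 ?trans_ge0. Qed.

Lemma step_weight_sum1 pol s a : \sum_(x : S * A) sval pol x.1 x.2 * trans s a x.1 = 1.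
Proof.
rewrite -(pair_bigA _ (fun s' a' => sval pol s' a' * trans s a s')) /=.
rewrite -[RHS](proj2 (@trans_dist R E s a)); apply: eq_bigr => s' _.
by rewrite -mulr_suml policy_sum1 mul1r.
Qed.

Lemma step_average_norm_le pol s a (F : S * A -> R) B : (forall x, `|F x| <= B) ->
  `|\sum_(x : S * A) sval pol x.1 x.2 * trans s a x.1 * F x| <= B.
Proof.
move=> FB; apply: le_trans (ler_norm_sum _ _ _) _.
rewrite -[leRHS]mul1r -(step_weight_sum1 pol s a) mulr_suml.
apply: ler_sum => x _; rewrite normrM ger0_norm ?step_weight_ge0 //.
by rewrite ler_wpM2l ?step_weight_ge0.
Qed.

Lemma prefP_ge0 pol n p : 0 <= prefP pol n p.
Proof.
case: n => [|n] //=; rewrite !mulr_ge0 ?init_ge0 //.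
  by apply: prodr_ge0 => i _; apply: policy_ge0.
by apply: prodr_ge0 => i _; apply: trans_ge0.
Qed.

Lemma cylP_ge0 pol c : 0 <= cylP pol c.
Proof. by case: c => [[m p]|] //; apply: prefP_ge0. Qed.

Lemma trajP_ge0 pol X : (0 <= trajP pol X)%E.
Proof.
apply: le_ereal_inf_tmp => y [C _ <-].
by apply: nneseries_ge0 => k _ _; rewrite lee_fin cylP_ge0.
Qed.

Lemma sum_tuple_rcons n (F : n.+2.-tuple (S * A) -> R) :
  \sum_(u : n.+2.-tuple (S * A)) F u =
  \sum_(t : n.+1.-tuple (S * A)) \sum_(x : S * A) F [tuple of rcons t x].
Proof.
rewrite pair_bigA /=.
rewrite (reindex (fun p : n.+1.-tuple (S * A) * (S * A) => [tuple of rcons p.1 p.2])) //=.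
exists (fun u : n.+2.-tuple (S * A) =>
   ([tuple of belast (thead u) (behead u)], last (thead u) (behead u))).
  move=> [t x] _ /=; rewrite (tuple_eta t) /= last_rcons; congr pair.
  by apply: val_inj; rewrite /= belast_rcons.
by move=> u _; apply: val_inj; rewrite /= -lastI [in RHS](tuple_eta u).
Qed.

Lemma tup_fun_rcons n (t : n.+1.-tuple (S * A)) x i : (i <= n)%N ->
  tup_fun [tuple of rcons t x] i = tup_fun t i.
Proof.
move=> le_in; rewrite /tup_fun /= nth_rcons size_tuple ltnS le_in.
by apply: set_nth_default; rewrite size_tuple ltnS.
Qed.

Lemma tup_fun_rcons_last n (t : n.+1.-tuple (S * A)) x :
  tup_fun [tuple of rcons t x] n.+1 = x.
Proof. by rewrite /tup_fun /= nth_rcons size_tuple ltnn eqxx. Qed.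

Lemma prefP_rcons pol n (t : n.+1.-tuple (S * A)) x :
  prefP pol n.+2 (tup_fun [tuple of rcons t x]) =
  prefP pol n.+1 (tup_fun t) *
    (sval pol x.1 x.2 * trans (tup_fun t n).1 (tup_fun t n).2 x.1).
Proof.
rewrite /prefP big_ord_recr [X in _ * X]big_ord_recr /=.
rewrite tup_fun_rcons // tup_fun_rcons_last tup_fun_rcons //.
rewrite (eq_bigr (fun i : 'I_n.+1 => sval pol (tup_fun t i).1 (tup_fun t i).2)); last first.
  by move=> i _; rewrite tup_fun_rcons // -ltnS.
rewrite (eq_bigr (fun i : 'I_n =>
    trans (tup_fun t i).1 (tup_fun t i).2 (tup_fun t i.+1).1)); last first.
  by move=> i _; rewrite !tup_fun_rcons // ltnW.
ring.
Qed.

Lemma eq_expect pol n f g : f =1 g -> expect pol n f = expect pol n g.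
Proof. by move=> /funext->. Qed.

Lemma expect0 pol g :
  expect pol 0 g = \sum_(x : S * A) init x.1 * sval pol x.1 x.2 * g (fun _ => x).
Proof.
rewrite /Defs.expn (reindex (fun x : S * A => [tuple x])) /=; last first.
  exists (fun u : 1.-tuple (S * A) => thead u) => // u _.
  by apply: val_inj; rewrite /= [in RHS](tuple_eta u) /=; case: u => -[|a [|b l]].
apply: eq_bigr => x _.
have -> : tup_fun [tuple x] = fun _ => x.
  by apply/funext => -[|i] //=; rewrite /tup_fun /= nth_nil.
by rewrite /prefP big_ord1 big_ord0 mulr1.
Qed.

Lemma expectS pol n g : determined_by n.+1 g ->
  expect pol n.+1 g = expect pol n (fun xi => \sum_(x : S * A)
     sval pol x.1 x.2 * trans (xi n).1 (xi n).2 x.1 * g (splice xi n x)).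
Proof.
move=> gn; rewrite /Defs.expn sum_tuple_rcons; apply: eq_bigr => t _.
rewrite big_distrr; apply: eq_bigr => x _.
rewrite prefP_rcons -mulrA; congr (_ * (_ * _)); apply: gn => i.
rewrite /splice; case: (leqP i n) => [le_in _|lt_ni le_in1].
  by rewrite tup_fun_rcons.
have -> : i = n.+1 by apply/eqP; rewrite eqn_leq le_in1.
exact: tup_fun_rcons_last.
Qed.

Lemma expectB pol n f g :
  expect pol n (fun xi => f xi - g xi) = expect pol n f - expect pol n g.
Proof. by rewrite /Defs.expn -sumrB; apply: eq_bigr => t _; rewrite mulrBr. Qed.

Lemma expectZ pol n c f : expect pol n (fun xi => c * f xi) = c * expect pol n f.
Proof. by rewrite /Defs.expn mulr_sumr; apply: eq_bigr => t _; rewrite mulrCA. Qed.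

Lemma expect_sum pol n k (F : nat -> traj E -> R) :
  expect pol n (fun xi => \sum_(i < k) F i xi) = \sum_(i < k) expect pol n (F i).
Proof.
by rewrite /Defs.expn exchange_big /=; apply: eq_bigr => t _; rewrite mulr_sumr.
Qed.

Lemma expect_widenS pol n g : determined_by n g -> expect pol n.+1 g = expect pol n g.
Proof.
move=> gn; rewrite expectS; last exact: determined_by_le gn.
apply: eq_expect => xi.
rewrite (eq_bigr (fun x => sval pol x.1 x.2 * trans (xi n).1 (xi n).2 x.1 * g xi)).
  by rewrite -big_distrl /= step_weight_sum1 mul1r.
by move=> x _; congr (_ * _); apply: gn => i le_in; rewrite /splice le_in.
Qed.

Lemma expect_widen pol n m g : (n <= m)%N -> determined_by n g ->
  expect pol m g = expect pol n g.
Proof.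
move=> /subnK <- gn; elim: (m - n)%N => [|k IH] //.
by rewrite addSn expect_widenS //; apply: determined_by_le gn; apply: leq_addl.
Qed.

Lemma expect1 pol n : expect pol n (fun _ => 1) = 1.
Proof.
rewrite (@expect_widen pol 0 n) // expect0.
under eq_bigr do rewrite mulr1.
rewrite -(pair_bigA _ (fun s a => init s * sval pol s a)) /=.
under eq_bigr do rewrite -mulr_sumr policy_sum1 mulr1.
exact: (proj2 (@init_dist R E)).
Qed.

Lemma expect_norm_le pol n g B : (forall xi, `|g xi| <= B) -> `|expect pol n g| <= B.
Proof.
move=> gB; apply: le_trans (ler_norm_sum _ _ _) _.
rewrite -[leRHS]mul1r -(expect1 pol n) /Defs.expn mulr_suml.
apply: ler_sum => t _; rewrite normrM ger0_norm ?prefP_ge0 // mulr1.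
by rewrite ler_wpM2l ?prefP_ge0.
Qed.

End FiniteHorizonExpectation.

Lemma geometric_tail (R : realType) (g : R) N k :
  (1 - g) * \sum_(t < k) g ^+ (N + t) = g ^+ N - g ^+ (N + k).
Proof.
elim: k => [|k IH]; first by rewrite big_ord0 addn0 mulr0 subrr.
by rewrite big_ord_recr /= mulrDr IH addnS exprS; ring.
Qed.

Lemma cvg_geometric_bound (R : realType) (c g : R) : 0 <= g -> g < 1 ->
  c * g ^+ N @[N --> \oo] --> 0.
Proof.
by move=> g0 g1; rewrite -(mulr0 c); apply: cvgMr; apply: cvg_expr; rewrite ger0_norm.
Qed.

Lemma mean_cvg0 (R : realType) (u : R^nat) K : (forall N, `|u N| <= K) ->
  N%:R^-1 * u N @[N --> \oo] --> 0.
Proof.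
move=> uK; rewrite -cvg_shiftS; apply: norm_cvg0.
apply: (@squeeze_cvgr _ _ _ _ (fun=> 0) (fun N => K * harmonic N)).
- apply: nearW => N /=; rewrite normr_ge0 normrM ger0_norm // mulrC.
  by rewrite ler_wpM2r.
- exact: cvg_cst.
- by rewrite -(mulr0 K); apply: cvgMr; apply: cvg_harmonic.
Qed.

Section GeometricCauchy.
Variables (R : realType) (u : R^nat) (c g : R).
Hypotheses (g_ge0 : 0 <= g) (g_lt1 : g < 1).
Hypothesis u_cauchy : forall N k, `|u (N + k)%N - u N| <= c * g ^+ N.

Lemma geometric_cauchy_cvg : cvgn u.
Proof.
apply/cauchy_cvgP/cauchyP => e e0.
have [N _ cgN] := cvgr0_norm_lt _ (cvg_geometric_bound c g_ge0 g_lt1) _ e0.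
exists (u N); exists N => // n /= le_Nn.
rewrite -ball_normE /= -(subnKC le_Nn) distrC.
exact: le_lt_trans (u_cauchy _ _) (le_lt_trans (ler_norm _) (cgN _ (leqnn N))).
Qed.

Lemma geometric_cauchy_lim N : `|limn u - u N| <= c * g ^+ N.
Proof.
have u_near n : (N <= n)%N -> u N - c * g ^+ N <= u n <= u N + c * g ^+ N.
  by move=> le_Nn; have := u_cauchy N (n - N); rewrite subnKC // ler_distl.
rewrite ler_distl; apply/andP; split.
  apply: limr_ge; first exact: geometric_cauchy_cvg.
  by exists N => // n /= /u_near /andP[].
apply: limr_le; first exact: geometric_cauchy_cvg.
by exists N => // n /= /u_near /andP[].
Qed.

End GeometricCauchy.

Section DiscountedReturn.
Variables (R : realType) (E : env R) (rho : nat -> traj E -> R) (M g : R).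
Hypotheses (g_ge0 : 0 <= g) (g_lt1 : g < 1).
Hypothesis M_ge0 : 0 <= M.
Hypothesis rho_bound : forall t xi, `|rho t xi| <= M.
Hypothesis rho_determined : forall t, determined_by t.+1 (rho t).

Definition partial_return (N : nat) (xi : traj E) := \sum_(t < N) g ^+ t * rho t xi.

Definition expected_return (pol : policy E) (N : nat) :=
  expect pol N (partial_return N).

Lemma partial_return_cauchy N k xi :
  `|partial_return (N + k)%N xi - partial_return N xi| <= M / (1 - g) * g ^+ N.
Proof.
have g1 : 0 < 1 - g by rewrite subr_gt0.
rewrite /partial_return big_split_ord /= addrAC subrr add0r.
apply: le_trans (ler_norm_sum _ _ _) _.
apply: (@le_trans _ _ (M * \sum_(i < k) g ^+ (N + i))).
  rewrite mulr_sumr; apply: ler_sum => i _.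
  by rewrite normrM ger0_norm ?exprn_ge0 // mulrC ler_wpM2r ?exprn_ge0.
rewrite mulrAC -mulrA ler_wpM2l // ler_pdivlMr // mulrC geometric_tail.
by rewrite lerBlDr lerDl exprn_ge0.
Qed.

Lemma partial_return_norm_le N xi : `|partial_return N xi| <= M / (1 - g).
Proof.
have := partial_return_cauchy 0 N xi.
by rewrite add0n expr0 mulr1 /partial_return big_ord0 subr0.
Qed.

Lemma partial_return_determined N : determined_by N (partial_return N).
Proof.
move=> xi xi' eq_xi; apply: eq_bigr => t _; congr (_ * _).
by apply: rho_determined => i le_it; apply/eq_xi/(leq_trans le_it).
Qed.

Lemma expected_return_cauchy pol N k :
  `|expected_return pol (N + k)%N - expected_return pol N| <= M / (1 - g) * g ^+ N.
Proof.
rewrite /expected_return -(@expect_widen _ _ pol N (N + k) (partial_return N)).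
- by rewrite -expectB; apply: expect_norm_le => xi; apply: partial_return_cauchy.
- exact: leq_addr.
- exact: partial_return_determined.
Qed.

Definition discounted_value (pol : policy E) : R := limn (expected_return pol).

Lemma discounted_value_near pol N :
  `|discounted_value pol - expected_return pol N| <= M / (1 - g) * g ^+ N.
Proof. exact/geometric_cauchy_lim/expected_return_cauchy. Qed.

End DiscountedReturn.

Lemma finite_fun_bounded (R : realType) (K : finType) (F : K -> R) :
  exists2 M, 0 < M & forall k, `|F k| <= M.
Proof.
exists (1 + \sum_k `|F k|); first by rewrite ltr_wpDr // sumr_ge0.
by move=> k; rewrite (bigD1 k) //= addrCA lerDl addr_ge0 // sumr_ge0.
Qed.

Section RewardMachine.
Variables (R : realType) (E : env R) (U : finType) (u0 : U).
Variables (dU : U -> st E -> act E -> st E -> U) (dR : U -> U -> st E -> act E -> st E -> R).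

Definition rm_reward (t : nat) (xi : traj E) : R :=
  rew (dR (rm_state u0 dU xi t) (rm_state u0 dU xi t.+1)) xi t.

Lemma rm_state_determined (xi xi' : traj E) t :
  (forall i, (i <= t)%N -> xi i = xi' i) -> rm_state u0 dU xi t = rm_state u0 dU xi' t.
Proof.
elim: t => [|t IH] eq_xi //=.
rewrite IH => [|i le_it]; last exact/eq_xi/leqW.
by rewrite (eq_xi t) ?leqnSn // (eq_xi t.+1).
Qed.

Lemma rm_reward_determined t : determined_by t.+1 (rm_reward t).
Proof.
move=> xi xi' eq_xi; rewrite /rm_reward /rew (eq_xi t) ?leqnSn // (eq_xi t.+1) //.
by rewrite !(@rm_state_determined xi xi') // => i le_it; apply/eq_xi/ltnW.
Qed.

Lemma rm_reward_bounded : exists2 M, 0 < M & forall t xi, `|rm_reward t xi| <= M.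
Proof.
have [M M_gt0 FM] := finite_fun_bounded (fun k : U * U * st E * act E * st E =>
                                           dR k.1.1.1.1 k.1.1.1.2 k.1.1.2 k.1.2 k.2).
by exists M => // t xi; exact: (FM (_, _, _, _, _)).
Qed.

Lemma J_RM_discounted_value g pol :
  J_RM u0 dU dR g pol = discounted_value rm_reward g pol.
Proof. by []. Qed.

End RewardMachine.

Lemma in_Ord_MR_RM (R : realType) (E : env R) (ord : policy E -> policy E -> Prop) :
  in_Ord_MR ord -> in_Ord_RM ord.
Proof.
case=> Rw [g [g01 Jord]].
by exists unit, tt, (fun _ _ _ _ => tt), (fun _ _ => Rw), g.
Qed.

Lemma big_bool_pair (R : realType) (F : bool * bool -> R) :
  \sum_(x : bool * bool) F x =
  F (true, true) + F (true, false) + F (false, true) + F (false, false).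
Proof.
rewrite (eq_bigr (fun x => F (x.1, x.2))); last by case.
by rewrite -(pair_bigA _ (fun a b => F (a, b))) /= !big_bool /=; ring.
Qed.

Lemma mix_dist_le (R : realType) (c a b B : R) : 0 <= c <= 1 ->
  `|a| <= B -> `|b| <= B -> `|c * a + (1 - c) * b - b| <= 2 * B * c.
Proof.
move=> /andP[c0 _] aB bB.
have -> : c * a + (1 - c) * b - b = c * (a - b) by ring.
rewrite normrM ger0_norm // mulrC ler_wpM2r //.
by apply: le_trans (ler_normB _ _) _; lra.
Qed.

Section LatchEnvironment.
Variable R : realType.

Definition latch_trans (s a s' : bool) : R := ((s || a) == s')%:R.
Definition latch_init (s : bool) : R := (~~ s)%:R.

Lemma latch_trans_dist s a : is_dist (latch_trans s a).
Proof.
split=> [s'|]; first exact: ler0n.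
by rewrite big_bool /latch_trans; case: s; case: a; rewrite /= ?addr0 ?add0r.
Qed.

Lemma latch_init_dist : is_dist latch_init.
Proof. by split=> [s|]; [exact: ler0n | rewrite big_bool /latch_init /= add0r]. Qed.

Lemma card_bool_gt0 : (0 < #|{: bool}|)%N.
Proof. by rewrite card_bool. Qed.

Definition latch_env : env R :=
  Env card_bool_gt0 card_bool_gt0 latch_trans_dist latch_init_dist.

Implicit Types pol : policy latch_env.

Definition stay_prob pol : R := sval pol false false.

Lemma stay_prob_ge0 pol : 0 <= stay_prob pol.
Proof. exact: policy_ge0 pol false false. Qed.

Lemma stay_prob_le1 pol : stay_prob pol <= 1.
Proof.
rewrite /stay_prob -(policy_sum1 pol false) big_bool /= lerDr.
exact: policy_ge0 pol false true.
Qed.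

Definition latch_value pol : R := (stay_prob pol == 1)%:R.

Definition latch_order pol pol' : Prop := latch_value pol' <= latch_value pol.

Lemma latch_order_total : total_preorder latch_order.
Proof.
split=> [p q r pq qr|p q]; first exact: le_trans qr pq.
by case: (leP (latch_value p) (latch_value q)) => [|/ltW] pq; [right | left].
Qed.

Definition clamp01 (p : R) : R := if 0 <= p <= 1 then p else 0.

Lemma clamp01_id p : 0 <= p <= 1 -> clamp01 p = p.
Proof. by rewrite /clamp01 => ->. Qed.

Lemma clamp01_range p : 0 <= clamp01 p <= 1.
Proof. by rewrite /clamp01; case: ifP => //; rewrite lexx ler01. Qed.

Definition bernoulli_act (p : R) (s a : bool) : R :=
  if a then clamp01 p else 1 - clamp01 p.

Lemma bernoulli_act_dist p s : is_dist (bernoulli_act p s).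
Proof.
have /andP[p0 p1] := clamp01_range p.
split=> [a|]; first by rewrite /bernoulli_act; case: a; lra.
by rewrite big_bool /bernoulli_act /=; ring.
Qed.

Definition bernoulli_policy p : policy latch_env :=
  exist _ (bernoulli_act p) (bernoulli_act_dist p).

Lemma latch_value_bernoulli p : 0 <= p <= 1 ->
  latch_value (bernoulli_policy p) = (p == 0)%:R.
Proof.
move=> p01; rewrite /latch_value /stay_prob /= /bernoulli_act clamp01_id //.
by rewrite -subr_eq0 addrAC subrr add0r oppr_eq0.
Qed.

Definition stay_traj : traj latch_env := fun _ => (false, false).

Lemma expect_bernoulli_near_stay p n G B : 0 <= p <= 1 ->
  determined_by n G -> (forall xi, `|G xi| <= B) ->
  `|expect (bernoulli_policy p) n G - G stay_traj| <= 2 * B * n.+1%:R * p.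
Proof.
move=> p01.
have pE : clamp01 p = p := clamp01_id p01.
elim: n G => [|n IH] G Gn GB.
  rewrite expect0 big_bool_pair /= /latch_init /bernoulli_act /= pE.
  have := mix_dist_le p01 (GB (fun _ => (false, true))) (GB stay_traj).
  by rewrite !mul0r !add0r !mul1r mulr1.
rewrite expectS //.
set H := fun xi : traj latch_env => _.
have Hn : determined_by n H.
  move=> xi xi' eq_xi; rewrite /H (eq_xi n) //; apply: eq_bigr => x _.
  by congr (_ * _); apply: Gn => i _; rewrite /splice; case: ifP => // /eq_xi.
have HB xi : `|H xi| <= B by apply: step_average_norm_le.
have H_stay : `|H stay_traj - G stay_traj| <= 2 * B * p.
  have stay_splice : splice stay_traj n (false, false) = stay_traj.
    by apply/funext => i; rewrite /splice; case: ifP.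
  rewrite /H big_bool_pair /= /latch_trans /bernoulli_act /= pE stay_splice.
  have := mix_dist_le p01 (GB (splice stay_traj n (false, true))) (GB stay_traj).
  by rewrite !mulr0 !mul0r !add0r !mulr1.
have -> : 2 * B * n.+2%:R * p = 2 * B * n.+1%:R * p + 2 * B * p.
  by rewrite [n.+2%:R]mulrSr; ring.
rewrite -(subrKA (H stay_traj)).
exact: le_trans (ler_normD _ _) (lerD (IH H Hn HB) H_stay).
Qed.

End LatchEnvironment.

Section LatchObjectives.
Variable R : realType.
Local Notation latch_env := (latch_env R).
Implicit Types pol : policy latch_env.

Definition latch_reward : st latch_env -> act latch_env -> st latch_env -> R :=
  fun s a _ => (~~ s && ~~ a)%:R.

Lemma expect_latch_reward pol t :
  expect pol t (fun xi => rew latch_reward xi t) = stay_prob pol ^+ t.+1.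
Proof.
elim: t => [|t IH].
  by rewrite expect0 big_bool_pair /rew /latch_reward /= /latch_init /stay_prob /=; ring.
rewrite expectS; last by move=> xi xi' eq_xi; rewrite /rew (eq_xi t.+1).
rewrite (@eq_expect _ _ pol t _ (fun xi => stay_prob pol * rew latch_reward xi t)).
  by rewrite expectZ IH [RHS]exprS.
move=> xi; rewrite big_bool_pair /rew /latch_reward /splice /= ltnn /latch_trans /stay_prob.
by case: (xi t).1; case: (xi t).2 => /=; rewrite ?mulr1n ?mulr0n; ring.
Qed.

Lemma expect_latch_return pol N :
  expect pol N (fun xi => \sum_(t < N) rew latch_reward xi t) =
  \sum_(t < N) stay_prob pol ^+ t.+1.
Proof.
rewrite (@expect_sum _ _ pol N N (fun t xi => rew latch_reward xi t)).
apply: eq_bigr => t _.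
rewrite (@expect_widen _ _ pol t) ?expect_latch_reward 1?ltnW //.
by move=> xi xi' eq_xi; rewrite /rew (eq_xi t).
Qed.

Lemma J_LAR_latch pol : J_LAR latch_reward pol = latch_value pol.
Proof.
rewrite /J_LAR /latch_value.
under eq_fun do rewrite expect_latch_return.
have [b0 b1] := (stay_prob_ge0 pol, stay_prob_le1 pol).
case: eqP => [->|/eqP b_neq1].
  apply: lim_near_cst => //; exists 1%N => // N /= N_gt0.
  under eq_bigr do rewrite expr1n.
  by rewrite sumr_const card_ord mulVf // pnatr_eq0 -lt0n.
have g1 : 0 < 1 - stay_prob pol by rewrite subr_gt0 lt_neqAle b_neq1.
apply: cvg_lim => //; apply: (@mean_cvg0 _ _ (1 / (1 - stay_prob pol))) => N.
rewrite ger0_norm ?sumr_ge0 // => [|t _]; last exact: exprn_ge0.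
rewrite ler_pdivlMr // mulrC (geometric_tail _ 1 N) lerBlDr.
by have := exprn_ge0 (1 + N) b0; lra.
Qed.

Lemma latch_order_LAR : in_Ord_LAR (@latch_order R).
Proof. by exists latch_reward => p q; rewrite !J_LAR_latch. Qed.

Definition latch_formula : ltl latch_env :=
  LAlways (@LAtom R latch_env false false false).

Lemma tup_fun_stay n :
  @tup_fun R latch_env n (nseq_tuple n.+1 ((false, false) : bool * bool)) = stay_traj R.
Proof. by apply/funext => i; rewrite /tup_fun nth_nseq; case: ifP. Qed.

Lemma trajP_latch_formula_le pol n :
  (trajP pol [set xi | holds latch_formula xi 0] <= (stay_prob pol ^+ n.+1)%:E)%E.
Proof.
apply: ereal_inf_lbound.
exists (fun k => if k == 0%N then
          Some (existT _ n (nseq_tuple n.+1 ((false, false) : bool * bool))) else None).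
  move=> xi /= xi_stay; exists 0%N => //= i _; rewrite tup_fun_stay.
  have [xi_s [xi_a _]] := xi_stay i (leq0n i).
  by move: xi_s xi_a; case: (xi i) => /= s a -> ->.
apply: lim_near_cst => //; exists 1%N => // -[|m] //= _.
rewrite big_nat_recl // big1 ?adde0 //= tup_fun_stay /prefP /=.
by rewrite !prodr_const !card_ord expr1n /latch_init /stay_prob /= mul1r mulr1.
Qed.

Lemma trajP_latch_formula_ge1 pol : stay_prob pol = 1 ->
  (1 <= trajP pol [set xi | holds latch_formula xi 0])%E.
Proof.
move=> stay1; apply: le_ereal_inf_tmp => y [C C_cover <-].
have [k _ stay_Ck] := C_cover (stay_traj R) (fun t _ => conj erefl (conj erefl erefl)).
apply: le_trans (nneseries_lim_ge k.+1 _); last by move=> i _ _; rewrite lee_fin cylP_ge0.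
rewrite big_nat_recr //= -[X in (X <= _)%E]add0e; apply: leeD.
  by apply: sume_ge0 => i _; rewrite lee_fin cylP_ge0.
move: stay_Ck; case: (C k) => [[m p]|] //= stay_Ck.
rewrite lee_fin /prefP -stay_Ck //.
rewrite (eq_bigr (fun _ => 1)) => [|i _]; last by rewrite -stay_Ck // -ltnS.
rewrite [X in _ * X](eq_bigr (fun _ => 1)) => [|i _]; last by rewrite -!stay_Ck // ltnW.
by rewrite !prodr_const !expr1n /latch_init /= !mulr1.
Qed.

Lemma J_LTL_latch pol : J_LTL latch_formula pol = latch_value pol.
Proof.
rewrite /J_LTL /latch_value; set X := [set xi | _].
have b0 := stay_prob_ge0 pol.
case: (eqVneq (stay_prob pol) 1) => [stay1|b_neq1].
  suff -> : trajP pol X = 1%E by [].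
  apply/le_anti; rewrite trajP_latch_formula_ge1 // andbT.
  by have := trajP_latch_formula_le pol 0; rewrite stay1 expr1n.
have b1 : stay_prob pol < 1 by rewrite lt_neqAle b_neq1 stay_prob_le1.
have := trajP_ge0 pol X; have := trajP_latch_formula_le pol.
(* [fine +oo = 0] settles the infinite case *)
case: (trajP pol X) => [x| |] //= x_le.
rewrite lee_fin => x0; apply/le_anti; rewrite x0 andbT leNgt.
apply/negP => x_gt0.
have [N _ bN] := cvgr0_norm_lt _ (cvg_geometric_bound (stay_prob pol) b0 b1) _ x_gt0.
have := x_le N; rewrite lee_fin exprS => x_bN.
by have := le_lt_trans (ler_norm _) (bN N (leqnn N)); rewrite ltNge x_bN.
Qed.

Lemma latch_order_LTL : in_Ord_LTL (@latch_order R).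
Proof. by exists latch_formula => p q; rewrite !J_LTL_latch. Qed.

End LatchObjectives.

Section DiscountedLatchOrder.
Variables (R : realType) (rho : nat -> traj (latch_env R) -> R) (M g : R).
Hypotheses (g_ge0 : 0 <= g) (g_lt1 : g < 1) (M_gt0 : 0 < M).
Hypothesis rho_bound : forall t xi, `|rho t xi| <= M.
Hypothesis rho_determined : forall t, determined_by t.+1 (rho t).

Local Notation J := (discounted_value rho g).
Local Notation c := (M / (1 - g)).
Local Notation bp := (@bernoulli_policy R).

Lemma discounted_bernoulli_near_stay p N : 0 <= p <= 1 ->
  `|J (bp p) - J (bp 0)| <=
    2 * (c * g ^+ N) + 2 * c * N.+1%:R * p.
Proof.
move=> p01; have M0 := ltW M_gt0.
have lim_near pol := discounted_value_near g_ge0 g_lt1 M0 rho_bound rho_determined pol N.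
have stay_near q : 0 <= q <= 1 ->
    `|expected_return rho g (bp q) N - partial_return rho g N (stay_traj R)|
      <= 2 * c * N.+1%:R * q.
  move=> q01; apply: expect_bernoulli_near_stay q01 _ _.
    exact: partial_return_determined.
  exact: partial_return_norm_le.
have := stay_near 0; rewrite mulr0 lexx ler01 => /(_ isT).
(* triangle inequality through the horizon-N values and the stay trajectory *)
move: (stay_near p p01) (lim_near (bp p)) (lim_near (bp 0)).
rewrite !ler_distl => /andP[? ?] /andP[? ?] /andP[? ?] /andP[? ?].
lra.
Qed.

Lemma discounted_bernoulli_cont e : 0 < e ->
  exists2 p, 0 < p <= 1 & `|J (bp p) - J (bp 0)| < e.
Proof.
move=> e_gt0; have c_gt0 : 0 < c by rewrite divr_gt0 // subr_gt0.
have [N _ cgN] :=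
  cvgr0_norm_lt _ (cvg_geometric_bound c g_ge0 g_lt1) _ (divr_gt0 e_gt0 (ltr0n _ 4)).
have K_gt0 : 0 < 8 * c * N.+1%:R by rewrite mulr_gt0 // mulr_gt0.
set p := Num.min 1 (e / (8 * c * N.+1%:R)).
have p_gt0 : 0 < p by rewrite lt_min ltr01 divr_gt0.
have p_le1 : p <= 1 by rewrite ge_min lexx.
have : p <= e / (8 * c * N.+1%:R) by rewrite ge_min lexx orbT.
rewrite ler_pdivlMr // => p_le.
exists p; first by rewrite p_gt0.
apply: le_lt_trans (discounted_bernoulli_near_stay N _) _; first by rewrite ltW.
have cgN_lt : c * g ^+ N < e / 4.
  by have := cgN N (leqnn N); rewrite ger0_norm // mulr_ge0 ?exprn_ge0 // ltW.
have -> : 2 * c * N.+1%:R * p = p * (8 * c * N.+1%:R) / 4.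
  by field; rewrite subr_eq0 gt_eqF.
lra.
Qed.

Lemma latch_order_not_discounted : ~ Defs.induced J (@latch_order R).
Proof.
move=> J_ord.
have latch_bp p : 0 < p <= 1 -> latch_value (bp p) = 0.
  by move=> /andP[p0 p1]; rewrite latch_value_bernoulli ?(gt_eqF p0) // ltW.
have latch_bp0 : latch_value (bp 0) = 1.
  by rewrite latch_value_bernoulli ?eqxx // lexx ler01.
have J_gap : 0 < J (bp 0) - J (bp 1).
  rewrite subr_gt0 ltNge; apply/negP => /(J_ord (bp 1) (bp 0)).
  by rewrite /latch_order latch_bp0 latch_bp ?ltr01 ?lexx // ler10.
have [p p01 Jp_near] := discounted_bernoulli_cont J_gap.
have Jp : J (bp p) = J (bp 1).
  apply/le_anti/andP; split; apply/J_ord;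
    by rewrite /latch_order !latch_bp ?ltr01 ?lexx.
by move: Jp_near; rewrite Jp distrC gtr0_norm // ltxx.
Qed.

End DiscountedLatchOrder.

Lemma latch_order_not_RM (R : realType) : ~ in_Ord_RM (@latch_order R).
Proof.
case=> U [u0 [dU [dR [g [/andP[g0 g1] J_ord]]]]].
have [M M_gt0 rho_bound] := rm_reward_bounded u0 dU dR.
apply: (latch_order_not_discounted g0 g1 M_gt0 rho_bound (rm_reward_determined u0 dU dR)).
by move=> p q; rewrite -!J_RM_discounted_value.
Qed.

Theorem mainTheorem8 (R : realType) :
  exists (E : env R) (ord : policy E -> policy E -> Prop),
    total_preorder ord /\
    (in_Ord_LAR ord /\ in_Ord_LTL ord) /\
    ~ (in_Ord_RM ord \/ in_Ord_MR ord).
Proof.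
exists (latch_env R), (@latch_order R).
split; first exact: latch_order_total.
split; first by split; [exact: latch_order_LAR | exact: latch_order_LTL].
by case=> [|/in_Ord_MR_RM]; apply: latch_order_not_RM.
Qed.
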